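(* For all $k\in\mathbb N$: (a) for all $f:\Xi_k\to\mathbb R$ and $g:\Xi_{k-1}\to\mathbb R$, $$\langle \mathfrak a_k g,f\rangle_{\alpha,k}=\frac{k}{|\alpha|+k-1}\langle g,\mathfrak a^\dagger_{k-1}f\rangle_{\alpha,k-1};$$ (b) $L^2(\mu_{\alpha,k})=\mathrm{Im}\,\mathfrak a_k\oplus\mathrm{Ker}\,\mathfrak a^\dagger_{k-1}$, an orthogonal direct sum.
   Context: $V$ is a finite set, $\alpha=(\alpha_x)_{x\in V}$ positive, $|\alpha|=\sum_x\alpha_x$. $\Xi_k:=\{\eta\in\mathbb N_0^V:\sum_x\eta_x=k\}$, $\Xi_0=\{0\}$ (functions on it are constants). $\mu_{\alpha,k}(\eta)=Z_{\alpha,k}^{-1}\prod_x\frac{\Gamma(\alpha_x+\eta_x)}{\Gamma(\alpha_x)\eta_x!}$ with $Z_{\alpha,k}=\frac{\Gamma(|\alpha|+k)}{\Gamma(|\alpha|)k!}$ (a probability measure on $\Xi_k$), and $\langle f,g\rangle_{\alpha,k}=\sum_{\eta\in\Xi_k}\mu_{\alpha,k}(\eta)f(\eta)g(\eta)$, defining $L^2(\mu_{\alpha,k})$. The annihilation operator $\mathfrak a_k:\mathbb R^{\Xi_{k-1}}\to\mathbb R^{\Xi_k}$ is $\mathfrak a_kg(\eta)=\sum_x\eta_x\,g(\eta-\delta_x)$ (terms with $\eta_x=0$ vanish), and the creation operator $\mathfrak a^\dagger_{k-1}:\mathbb R^{\Xi_k}\to\mathbb R^{\Xi_{k-1}}$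 is $\mathfrak a^\dagger_{k-1}f(\xi)=\sum_x(\xi_x+\alpha_x)f(\xi+\delta_x)$. *)

From HB Require Import structures.
From mathcomp Require Import all_boot all_order all_algebra.
Set Implicit Arguments. Unset Strict Implicit. Unset Printing Implicit Defensive.
Import Order.TTheory GRing.Theory Num.Theory.
Local Open Scope ring_scope.

Section Defs.
Variables (R : realFieldType) (V : finType).

Definition conf := {ffun V -> nat}.

Definition inXi (k : nat) (eta : conf) : bool := (\sum_(x : V) eta x)%N == k.

(* sum of F over the finite set Xi_k (each eta in Xi_k has eta_x <= k) *)
Definition sumXi (k : nat) (F : conf -> R) : R :=
  \sum_(e : {ffun V -> 'I_k.+1} | (\sum_(x : V) (e x : nat))%N == k)
     F [ffun x => nat_of_ord (e x)].

(* rising factorial  a (a+1) ... (a+n-1) = Gamma(a+n)/Gamma(a) *)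
Definition rising (a : R) (n : nat) : R := \prod_(i < n) (a + i%:R).

Definition abs_alpha (alpha : V -> R) : R := \sum_(x : V) alpha x.

(* Z_{alpha,k} = Gamma(|alpha|+k) / (Gamma(|alpha|) k!) *)
Definition Zak (alpha : V -> R) (k : nat) : R :=
  rising (abs_alpha alpha) k / (k`!)%:R.

Definition mu (alpha : V -> R) (k : nat) (eta : conf) : R :=
  (Zak alpha k)^-1 * \prod_(x : V) (rising (alpha x) (eta x) / ((eta x)`!)%:R).

Definition inner (alpha : V -> R) (k : nat) (f g : conf -> R) : R :=
  sumXi k (fun eta => mu alpha k eta * f eta * g eta).

Definition conf_sub (eta : conf) (x : V) : conf := [ffun y => (eta y - (y == x))%N].
Definition conf_add (eta : conf) (x : V) : conf := [ffun y => (eta y + (y == x))%N].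

Definition ann (g : conf -> R) : conf -> R :=
  fun eta => \sum_(x : V) (eta x)%:R * g (conf_sub eta x).

Definition cre (alpha : V -> R) (f : conf -> R) : conf -> R :=
  fun xi => \sum_(x : V) ((xi x)%:R + alpha x) * f (conf_add xi x).

End Defs.

(* (a) In <a_k g, f>_k substitute eta = xi + delta_x for each site x: the terms with
   eta_x = 0 vanish, and the weights satisfy
     mu_k(xi + delta_x) (xi_x + 1) = k / (|alpha| + k - 1) mu_{k-1}(xi) (xi_x + alpha_x),
   which turns the summand of <a_k g, f>_k into that of <g, a^dagger f>_{k-1}.
   (b) By (a), Im a_k is orthogonal to Ker a^dagger, and a_k g in Ker a^dagger has
   <a_k g, a_k g>_k = 0.  For the decomposition, project f orthogonally onto the span of
   the a_k delta_xi, xi in Xi_{k-1}: the residual is orthogonal to each a_k delta_xi, which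
   by (a) says that a^dagger of it vanishes at xi.  On all functions <.,.>_k is only
   semidefinite, so the projection is built by a Gram-Schmidt recursion that skips null
   vectors. *)

From HB Require Import structures.
From mathcomp Require Import all_boot all_order all_algebra.
From mathcomp Require Import ring lra.
From mathcomp Require Import boolp functions.
Import Order.TTheory GRing.Theory Num.Theory.
Local Open Scope ring_scope.
Set Implicit Arguments. Unset Strict Implicit. Unset Printing Implicit Defensive.

Lemma reindex_sum_inj (M : nmodType) (I J : finType) (h : J -> I) (F : I -> M) :
  injective h -> (forall i, F i != 0 -> i \in codom h) ->
  \sum_i F i = \sum_j F (h j).
Proof.
move=> h_inj F_supp; rewrite (bigID (mem (codom h))) /= [X in _ + X]big1 ?addr0.
  by rewrite -big_uniq ?big_image // map_inj_uniq ?enum_uniq.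
by move=> i; apply: contraNeq => /F_supp.
Qed.

Section OrthogonalProjection.
Variables (R : realFieldType) (E : lmodType R) (form : E -> E -> R).
Hypothesis form_sym : forall u v, form u v = form v u.
Hypothesis formDl : forall u v w, form (u + v) w = form u w + form v w.
Hypothesis formZl : forall a u w, form (a *: u) w = a * form u w.
Hypothesis form_ge0 : forall u, 0 <= form u u.

Lemma formDr u v w : form u (v + w) = form u v + form u w.
Proof. by rewrite !(form_sym u) formDl. Qed.

Lemma formZr a u w : form u (a *: w) = a * form u w.
Proof. by rewrite !(form_sym u) formZl. Qed.

Lemma formBl u v w : form (u - v) w = form u w - form v w.
Proof. by rewrite formDl -scaleN1r formZl mulN1r. Qed.

Lemma formBr u v w : form u (v - w) = form u v - form u w.
Proof. by rewrite !(form_sym u) formBl. Qed.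

Lemma form_sumr (I : Type) (s : seq I) (v : I -> E) u :
  form u (\sum_(i <- s) v i) = \sum_(i <- s) form u (v i).
Proof.
apply: (big_morph (form u)) => [v1 v2|]; first exact: formDr.
by rewrite -(scale0r 0) formZr mul0r.
Qed.

(* At x = (q + 1) u - p w, 0 <= form x x reads 0 <= - (q + 2) p^2. *)
Lemma form_self_eq0 u w : form u u = 0 -> form u w = 0.
Proof.
move=> uu0; set p := form u w; set q := form w w.
have q_ge0 : 0 <= q := form_ge0 w.
have := form_ge0 ((q + 1) *: u - p *: w).
rewrite !(formBl, formBr, formZl, formZr) uu0 (form_sym w u) -/p -/q.
nra.
Qed.

Lemma orthogonal_projection_seq (I : eqType) (v : I -> E) (s : seq I) :
  uniq s -> forall f, exists c : I -> R,
  forall i, i \in s -> form (f - \sum_(j <- s) c j *: v j) (v i) = 0.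
Proof.
elim: s => [_ f|i0 s IH /= /andP[i0_notin_s uniq_s] f]; first by exists (fun=> 0).
have [cf orth_f] := IH uniq_s f.
have [cv orth_v] := IH uniq_s (v i0).
set r := f - _ in orth_f; set w := v i0 - _ in orth_v.
have [t rw_eq] : exists t, form r w = t * form w w.
  have [ww0|ww_neq0] := eqVneq (form w w) 0.
    by exists 0; rewrite mul0r form_sym form_self_eq0.
  by exists (form r w / form w w); rewrite divfK.
exists (fun j => if j == i0 then t else cf j - t * cv j).
have sum_s : \sum_(j <- s) (cf j - t * cv j) *: v j
              = \sum_(j <- s) cf j *: v j - t *: \sum_(j <- s) cv j *: v j.
  by rewrite scaler_sumr -sumrB; apply: eq_bigr => j _; rewrite scalerBl scalerA.
have -> : f - \sum_(j <- i0 :: s) (if j == i0 then t else cf j - t * cv j) *: v j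
          = r - t *: w.
  rewrite big_cons eqxx (eq_big_seq (fun j => (cf j - t * cv j) *: v j)); last first.
    by move=> j js; case: eqP js i0_notin_s => // ->->.
  rewrite sum_s /r /w scalerBr opprD !opprB addrA addrACA [RHS]addrACA.
  by congr (_ + _); rewrite addrC.
have orth_s j : j \in s -> form (r - t *: w) (v j) = 0.
  by move=> js; rewrite formBl formZl orth_f // orth_v // mulr0 subrr.
move=> i; rewrite in_cons => /predU1P[->|]; last exact: orth_s.
rewrite -(subrK (\sum_(j <- s) cv j *: v j) (v i0)) -/w formDr form_sumr.
rewrite big1_seq => [|j /andP[_ js]]; last by rewrite formZr orth_s ?mulr0.
by rewrite formBl formZl -rw_eq subrr addr0.
Qed.

Lemma orthogonal_projection (I : finType) (v : I -> E) f :
  exists c : I -> R, forall i, form (f - \sum_j c j *: v j) (v i) = 0.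
Proof.
have [c orth] := orthogonal_projection_seq v (enum_uniq I) f.
by exists c => i; rewrite -big_enum orth ?mem_enum.
Qed.

End OrthogonalProjection.

Section Configurations.
Variables (R : realFieldType) (V : finType).
Implicit Types (eta xi : conf V) (F G : conf V -> R).

Definition conf_of n (e : {ffun V -> 'I_n}) : conf V := [ffun x => nat_of_ord (e x)].

Lemma conf_of_inj n : injective (@conf_of n).
Proof.
move=> e1 e2 /ffunP eq12; apply/ffunP => x; apply: val_inj.
by have := eq12 x; rewrite !ffunE.
Qed.

Lemma inXi_conf_of k n (e : {ffun V -> 'I_n}) :
  inXi k (conf_of e) = ((\sum_x (e x : nat))%N == k).
Proof. by rewrite /inXi; under eq_bigr do rewrite ffunE. Qed.

Lemma inXi_le k eta x : inXi k eta -> (eta x <= k)%N.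
Proof. by move=> /eqP <-; rewrite (bigD1 x) //= leq_addr. Qed.

Lemma conf_of_onto k eta :
  inXi k eta -> exists e : {ffun V -> 'I_k.+1}, conf_of e = eta.
Proof.
move=> eta_k; exists [ffun x => inord (eta x)].
by apply/ffunP => x; rewrite !ffunE inordK // ltnS (inXi_le x eta_k).
Qed.

Lemma sumXiE k F :
  sumXi k F = \sum_(e : {ffun V -> 'I_k.+1} | inXi k (conf_of e)) F (conf_of e).
Proof. by apply: eq_bigl => e; rewrite inXi_conf_of. Qed.

Lemma eq_sumXi k F G :
  (forall eta, inXi k eta -> F eta = G eta) -> sumXi k F = sumXi k G.
Proof. by move=> eqFG; rewrite !sumXiE; apply: eq_bigr => e /eqFG. Qed.

Lemma sumXi_sum k (I : Type) (s : seq I) (F : I -> conf V -> R) :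
  sumXi k (fun eta => \sum_(i <- s) F i eta) = \sum_(i <- s) sumXi k (F i).
Proof. exact: exchange_big. Qed.

Lemma sumXiZ k a F : sumXi k (fun eta => a * F eta) = a * sumXi k F.
Proof. by rewrite /sumXi mulr_sumr. Qed.

Lemma sumXi_eq0P k F : (forall eta, inXi k eta -> 0 <= F eta) ->
  sumXi k F = 0 -> forall eta, inXi k eta -> F eta = 0.
Proof.
rewrite sumXiE => F_ge0 /psumr_eq0P F0 eta eta_k.
have [e e_eta] := conf_of_onto eta_k; rewrite -e_eta in eta_k *.
by apply: F0 => // e' /F_ge0.
Qed.

Lemma sumXi_delta k xi F : inXi k xi ->
  sumXi k (fun eta => (eta == xi)%:R * F eta) = F xi.
Proof.
move=> xi_k; have [e0 e0_xi] := conf_of_onto xi_k.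
rewrite sumXiE (bigD1 e0) /= ?e0_xi // eqxx mul1r big1 ?addr0 // => e /andP[_ ne0].
by rewrite -e0_xi (inj_eq (@conf_of_inj _)) (negbTE ne0) mul0r.
Qed.

Lemma conf_addE xi x y : conf_add xi x y = (xi y + (y == x))%N.
Proof. by rewrite ffunE. Qed.

Lemma conf_addK xi x : conf_sub (conf_add xi x) x = xi.
Proof. by apply/ffunP => y; rewrite !ffunE addnK. Qed.

Lemma conf_subK eta x : (0 < eta x)%N -> conf_add (conf_sub eta x) x = eta.
Proof.
move=> eta_x; apply/ffunP => y; rewrite !ffunE.
by case: eqP => [->|]; rewrite ?subnK ?subn0 ?addn0.
Qed.

Lemma conf_add_inj (x : V) : injective (fun xi => conf_add xi x).
Proof. by move=> xi1 xi2 /(congr1 (fun eta => conf_sub eta x)); rewrite !conf_addK. Qed.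

Lemma sum_conf_add xi x : (\sum_y conf_add xi x y)%N = (\sum_y xi y).+1.
Proof.
rewrite (bigD1 x) //= [X in _ = X.+1](bigD1 x) //= conf_addE eqxx addn1 addSn.
by under eq_bigr => y /negbTE y_x do rewrite conf_addE y_x addn0.
Qed.

Lemma inXi_conf_add k xi x : inXi k.+1 (conf_add xi x) = inXi k xi.
Proof. by rewrite /inXi sum_conf_add eqSS. Qed.

Lemma inXi_succ_pos k eta : inXi k.+1 eta -> exists x, (0 < eta x)%N.
Proof.
move=> /eqP eta_sum.
case: (pickP (fun x => 0 < eta x)%N) => [x eta_x|eta0]; first by exists x.
by move: eta_sum; rewrite big1 // => x _; apply/eqP; rewrite -leqn0 leqNgt eta0.
Qed.

Lemma sumXi_conf_add k x F : (forall eta, eta x = 0%N -> F eta = 0) ->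
  sumXi k.+1 F = sumXi k (fun xi => F (conf_add xi x)).
Proof.
move=> F0.
pose h (e : {ffun V -> 'I_k.+1}) : {ffun V -> 'I_k.+2} :=
  [ffun y => inord (conf_add (conf_of e) x y)].
have conf_of_h e : conf_of (h e) = conf_add (conf_of e) x.
  apply/ffunP => y; rewrite !ffunE inordK //.
  have ey_le_k : (e y <= k)%N := ltn_ord (e y).
  by rewrite ltnS (leq_trans (leq_add ey_le_k (leq_b1 _))) ?addn1.
rewrite !sumXiE !big_mkcond (reindex_sum_inj (h := h)) /=.
- by rewrite [RHS]big_mkcond; apply: eq_bigr => e _; rewrite conf_of_h inXi_conf_add.
- by move=> e1 e2 /(congr1 (@conf_of _)); rewrite !conf_of_h => /conf_add_inj /conf_of_inj.
move=> e'; case: ifP => [e'_k F_neq0|_]; last by rewrite eqxx.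
have e'_x : (0 < conf_of e' x)%N by rewrite lt0n; apply: contra_neq F_neq0 => /F0.
have [|e e_eq] := conf_of_onto (_ : inXi k (conf_sub (conf_of e') x)).
  by rewrite -(inXi_conf_add k _ x) conf_subK.
by apply/codomP; exists e; apply: conf_of_inj; rewrite conf_of_h e_eq conf_subK.
Qed.

End Configurations.

Lemma rising_ge0 (R : realFieldType) (a : R) n : 0 <= a -> 0 <= rising a n.
Proof. by move=> a_ge0; apply: prodr_ge0 => i _; rewrite addr_ge0. Qed.

Lemma rising_gt0 (R : realFieldType) (a : R) n : 0 < a -> 0 < rising a n.
Proof. by move=> a_gt0; apply: prodr_gt0 => i _; rewrite ltr_wpDr. Qed.

Lemma risingS (R : realFieldType) (a : R) n : rising a n.+1 = rising a n * (a + n%:R).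
Proof. by rewrite /rising big_ord_recr. Qed.

Section Weights.
Variables (R : realFieldType) (V : finType) (alpha : V -> R).
Hypothesis alpha_gt0 : forall x, 0 < alpha x.

Lemma le_abs_alpha x : alpha x <= abs_alpha alpha.
Proof.
by rewrite /abs_alpha (bigD1 x) //= lerDl sumr_ge0 // => y _; apply/ltW.
Qed.

Lemma abs_alpha_gt0 (x : V) : 0 < abs_alpha alpha.
Proof. exact: lt_le_trans (alpha_gt0 x) (le_abs_alpha x). Qed.

Lemma mu_ge0 k eta : 0 <= mu alpha k eta.
Proof.
have A_ge0 : 0 <= abs_alpha alpha by apply: sumr_ge0 => x _; apply/ltW.
rewrite /mu /Zak mulr_ge0 ?invr_ge0 ?divr_ge0 ?rising_ge0 //.
by apply: prodr_ge0 => y _; rewrite divr_ge0 ?rising_ge0 ?(ltW (alpha_gt0 y)) ?ler0n.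
Qed.

Lemma mu_gt0 k eta : 0 < abs_alpha alpha -> 0 < mu alpha k eta.
Proof.
move=> A_gt0; rewrite /mu /Zak mulr_gt0 ?invr_gt0 ?divr_gt0 ?rising_gt0 ?ltr0n ?fact_gt0 //.
by apply: prodr_gt0 => y _; rewrite divr_gt0 ?rising_gt0 ?ltr0n ?fact_gt0.
Qed.

Lemma mu_conf_add k xi x :
  mu alpha k.+1 (conf_add xi x) * (xi x).+1%:R
  = k.+1%:R / (abs_alpha alpha + k%:R) * mu alpha k xi * ((xi x)%:R + alpha x).
Proof.
have A_gt0 := abs_alpha_gt0 x.
rewrite /mu (bigD1 x) //= [X in _ = _ * (_ * X) * _](bigD1 x) //=.
under eq_bigr => y /negbTE y_x do rewrite conf_addE y_x addn0.
rewrite conf_addE eqxx addn1 /Zak !risingS !factS !natrM.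
have Ak_gt0 : 0 < abs_alpha alpha + k%:R by rewrite ltr_wpDr.
field; rewrite !nat1r !pnatr_eq0 -!lt0n !fact_gt0 !gt_eqF ?rising_gt0 //.
Qed.

End Weights.

Section InnerProduct.
Variables (R : realFieldType) (V : finType) (alpha : V -> R).
Hypothesis alpha_gt0 : forall x, 0 < alpha x.
Implicit Types (u w : conf V -> R).

Lemma inner_sym k u w : inner alpha k u w = inner alpha k w u.
Proof. by apply: eq_sumXi => eta _; rewrite mulrAC. Qed.

(* Functions into [R^o] carry the pointwise [lmodType R] structure of [functions]. *)
Lemma innerDl k (u v w : conf V -> R^o) :
  inner alpha k (u + v) w = inner alpha k u w + inner alpha k v w.
Proof.
by rewrite /inner /sumXi -big_split; apply: eq_bigr => e _ /=; rewrite mulrDr mulrDl.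
Qed.

Lemma innerZl k a (u w : conf V -> R^o) :
  inner alpha k (a *: u) w = a * inner alpha k u w.
Proof.
rewrite /inner -sumXiZ; apply: eq_sumXi => eta _.
by rewrite -[(a *: u) eta]/(a * u eta) mulrCA -!mulrA.
Qed.

Lemma inner_term_ge0 k u eta : 0 <= mu alpha k eta * u eta * u eta.
Proof. by rewrite -mulrA mulr_ge0 ?mu_ge0 // -expr2 sqr_ge0. Qed.

Lemma inner_ge0 k u : 0 <= inner alpha k u u.
Proof. by apply: sumr_ge0 => e _; apply: inner_term_ge0. Qed.

Lemma inner_vanish k u w :
  (forall eta, inXi k eta -> u eta = 0) -> inner alpha k u w = 0.
Proof.
move=> u0; rewrite /inner (eq_sumXi (G := fun=> 0)); first by rewrite /sumXi big1.
by move=> eta /u0->; rewrite mulr0 mul0r.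
Qed.

Lemma inner_self_eq0 k u :
  inner alpha k.+1 u u = 0 -> forall eta, inXi k.+1 eta -> u eta = 0.
Proof.
move=> uu0 eta eta_k; have [x _] := inXi_succ_pos eta_k.
have mu_pos := mu_gt0 alpha_gt0 k.+1 eta (abs_alpha_gt0 alpha_gt0 x).
have /eqP := sumXi_eq0P (fun eta' _ => inner_term_ge0 k.+1 u eta') uu0 eta_k.
by rewrite -mulrA mulf_eq0 gt_eqF //= mulf_eq0 orbb => /eqP.
Qed.

Lemma inner_delta k xi u : inXi k xi ->
  inner alpha k (fun eta => (eta == xi)%:R) u = mu alpha k xi * u xi.
Proof.
move=> xi_k; rewrite -(sumXi_delta (fun eta => mu alpha k eta * u eta) xi_k).
by apply: eq_sumXi => eta _; rewrite mulrCA mulrA.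
Qed.

Lemma ann_cre_adjoint k f g :
  inner alpha k.+1 (ann g) f
  = k.+1%:R / (abs_alpha alpha + k%:R) * inner alpha k g (cre alpha f).
Proof.
rewrite /inner /ann /cre.
under eq_sumXi => eta _ do rewrite mulr_sumr mulr_suml.
under [sumXi k _]eq_sumXi => xi _ do rewrite mulr_sumr.
rewrite !sumXi_sum mulr_sumr; apply: eq_bigr => x _.
rewrite (@sumXi_conf_add _ _ k x) => [|eta ->]; last by rewrite mul0r mulr0 mul0r.
rewrite -sumXiZ; apply: eq_sumXi => xi _.
rewrite conf_addK conf_addE eqxx addn1.
transitivity (mu alpha k.+1 (conf_add xi x) * (xi x).+1%:R * g xi * f (conf_add xi x)).
  by ring.
by rewrite mu_conf_add //; ring.
Qed.

Lemma ann_lincomb (I : finType) (c : I -> R) (d : I -> conf V -> R^o) :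
  ann (\sum_i c i *: d i) = \sum_i c i *: (ann (d i) : conf V -> R^o).
Proof.
have scaleE a (h : conf V -> R^o) eta : (a *: h) eta = a * h eta by [].
apply/funext => eta; rewrite /ann !fct_sumE /=.
under eq_bigr do rewrite mulr_sumr.
rewrite exchange_big; apply: eq_bigr => i _.
by rewrite scaleE mulr_sumr; apply: eq_bigr => x _; rewrite scaleE mulrCA.
Qed.

Lemma ann_orthogonal_projection k f : exists g,
  forall xi, inXi k xi -> cre alpha (fun eta => f eta - ann g eta) xi = 0.
Proof.
pose delta (e : {ffun V -> 'I_k.+1}) : conf V -> R^o := fun eta => (eta == conf_of e)%:R.
have [c orth] := @orthogonal_projection R (conf V -> R^o) (inner alpha k.+1)
  (inner_sym k.+1) (innerDl k.+1) (innerZl k.+1) (inner_ge0 k.+1) _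
  (fun e => ann (delta e)) f.
exists (\sum_e c e *: delta e) => xi xi_k.
have [x _|V0] := pickP (@predT V); last by rewrite /cre big_pred0.
have [e e_xi] := conf_of_onto xi_k.
have A_gt0 := abs_alpha_gt0 alpha_gt0 x.
have const_gt0 : 0 < k.+1%:R / (abs_alpha alpha + k%:R) by rewrite divr_gt0 // ltr_wpDr.
move: (orth e); rewrite -ann_lincomb inner_sym ann_cre_adjoint /delta e_xi inner_delta //.
by move/eqP; rewrite mulf_eq0 gt_eqF //= mulf_eq0 gt_eqF ?mu_gt0 //= => /eqP.
Qed.

End InnerProduct.

Theorem proposition3p1 (R : realFieldType) (V : finType) (alpha : V -> R)
  (alpha_pos : forall x, 0 < alpha x) (k : nat) (k_pos : (0 < k)%N) :
  (* (a) adjointness relation *)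
  (forall (f g : conf V -> R),
     inner alpha k (ann g) f
     = k%:R / (abs_alpha alpha + k%:R - 1) * inner alpha k.-1 g (cre alpha f))
  /\
  (* (b) L^2(mu_{alpha,k}) = Im a_k (+) Ker a^dagger_{k-1}, orthogonal direct sum *)
  ((forall (g h : conf V -> R),
      (forall xi, inXi k.-1 xi -> cre alpha h xi = 0) ->
      inner alpha k (ann g) h = 0)
   /\
   (forall (g : conf V -> R),
      (forall xi, inXi k.-1 xi -> cre alpha (ann g) xi = 0) ->
      forall eta, inXi k eta -> ann g eta = 0)
   /\
   (forall (f : conf V -> R), exists (g h : conf V -> R),
      (forall xi, inXi k.-1 xi -> cre alpha h xi = 0) /\
      (forall eta, inXi k eta -> f eta = ann g eta + h eta))).
Proof.
case: k k_pos => // k _ /=.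
have adjoint f g : inner alpha k.+1 (ann g) f
    = k.+1%:R / (abs_alpha alpha + k.+1%:R - 1) * inner alpha k g (cre alpha f).
  by rewrite (_ : _ - 1 = abs_alpha alpha + k%:R) ?ann_cre_adjoint // -natr1 addrA addrK.
have ann_orth_ker g h : (forall xi, inXi k xi -> cre alpha h xi = 0) ->
    inner alpha k.+1 (ann g) h = 0.
  by move=> h_ker; rewrite adjoint inner_sym inner_vanish ?mulr0.
split; first exact: adjoint.
split; first exact: ann_orth_ker.
split=> [g ann_g_ker|f]; first by apply: (inner_self_eq0 alpha_pos); rewrite ann_orth_ker.
have [g g_proj] := ann_orthogonal_projection alpha_pos k f.
by exists g, (fun eta => f eta - ann g eta); split=> // eta _; rewrite addrC subrK.
Qed.
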